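(* Let $p,q\ge1$, $N>\max(p,q)$, and let $\mu$ be a $q\times p$ matrix of measures. Let $b\in\{1,\dots,q\}$ and $a\in\{1,\dots,p\}$, and assume that the moment matrices $\mathscr M_{N,(n,m)}$ involved below admit Gauss--Borel factorizations $\mathscr M_{N,(n,m)}=\mathscr L_{N,(n,m)}^{-1}\mathscr U_{N,(n,m)}^{-1}$ with lower unitriangular $\mathscr L_{N,(n,m)}$ (and leading principal submatrices $\mathscr L_{k,(n,m)},\mathscr U_{k,(n,m)}$ for $k\le N$). Define \[\mathscr T^{[N,N-p]}_{(n,m)}:=\mathscr U_{N,(n,m)}^{-1}\big(\Lambda^{[N-p,N]}_{[p]}\big)^\top\mathscr U_{N-p,(n,m)},\qquad \mathscr T^{[N-q,N]}_{(n,m)}:=\mathscr L_{N-q,(n,m)}\Lambda^{[N-q,N]}_{[q]}\mathscr L_{N,(n,m)}^{-1},\] and $U_b:=\mathscr U_{N,(b,0)}^{-1}\mathscr U_{N,(b-1,0)}$, $L_a:=\mathscr L_{N,(0,a-1)}\mathscr L_{N,(0,a)}^{-1}$. Denote by $U_b^{[N-p]}$ and $L_a^{[N-q]}$ their leading principal submatrices of sizes $N-p$ and $N-q$. Then \[U_b\,\mathscr T^{[N,N-p]}_{(b-1,0)}\big(U_b^{[N-p]}\big)^{-1}=\mathscr T^{[N,N-p]}_{(b,0)},\qquad \big(L_a^{[N-q]}\big)^{-1}\mathscr T^{[N-q,N]}_{(0,a-1)}L_a=\mathscr T^{[N-q,N]}_{(0,a)}.\]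
   Context: All matrices are indexed from $0$. $\mu$ is a $q\times p$ matrix of real measures with finite moments. For $r,n\ge1$, $X^{[n]}_{[r]}(x)$ is the $n\times r$ matrix whose row $k$ is $x^{\lfloor k/r\rfloor}e_{k\bmod r}^\top$ ($e_0,\dots,e_{r-1}$ standard basis of $\mathbb R^r$). $\Lambda^{[n,n+r]}_{[r]}$ is the $n\times(n+r)$ matrix with entries $\delta_{j,i+r}$. $\mathfrak X_{[r,1]}(x)$ is the $r\times r$ matrix with $(\mathfrak X_{[r,1]})_{i,i+1}=1$ ($0\le i\le r-2$), $(\mathfrak X_{[r,1]})_{r-1,0}=x$, other entries $0$. Christoffel perturbations $\mathrm d\mu_{(n,m)}:=\mathfrak X_{[q,1]}^n\,\mathrm d\mu\,(\mathfrak X_{[p,1]}^m)^\top$, with moment matrices $\mathscr M_{N,(n,m)}:=\int X^{[N]}_{[q]}\,\mathrm d\mu_{(n,m)}\,(X^{[N]}_{[p]})^\top$; $(n,m)=(0,0)$ is $\mu$ itself. *)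

From HB Require Import structures.
From mathcomp Require Import all_boot all_order all_algebra.
From mathcomp Require Import all_classical all_reals all_analysis.
Set Implicit Arguments. Unset Strict Implicit. Unset Printing Implicit Defensive.
Import Order.TTheory GRing.Theory Num.Theory.
Local Open Scope ring_scope.
Local Open Scope classical_set_scope.

Section Defs.
Variable R : realType.

(* A real (signed) measure on the Borel sets of R, given by a Jordan-type
   decomposition mu = rpos - rneg into two (positive) measures. *)
Record rmeasure := RMeasure {
  rpos : {measure set (measurableTypeR R) -> \bar R};
  rneg : {measure set (measurableTypeR R) -> \bar R} }.

Definition finite_moments (nu : rmeasure) : Prop :=
  forall k : nat,
    (rpos nu).-integrable setT (fun x : measurableTypeR R => ((x : R) ^+ k)%:E) /\
    (rneg nu).-integrable setT (fun x : measurableTypeR R => ((x : R) ^+ k)%:E).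

Definition rmint (nu : rmeasure) (f : R -> R) : R :=
  Rintegral (rpos nu) setT f - Rintegral (rneg nu) setT f.

Definition Xmono (n r : nat) (x : R) : 'M[R]_(n, r) :=
  \matrix_(k < n, j < r) (if (j : nat) == (k %% r)%N then x ^+ (k %/ r) else 0).

Definition Xfrak (r : nat) (x : R) : 'M[R]_r :=
  \matrix_(i < r, j < r)
    ((((j : nat) == i.+1) && (i.+1 < r)%N)%:R
     + (((i : nat) == r.-1) && ((j : nat) == 0%N))%:R * x).

Definition mxpow (r : nat) (A : 'M[R]_r) (n : nat) : 'M[R]_r :=
  iter n (mulmx A) 1%:M.

(* Moment matrix M_{N,(n,m)} of the Christoffel perturbation
   d mu_{(n,m)} = Xfrak_q^n d mu Xfrak_p^m^T:
   entry (k,l) = sum_{i,j} int (X_q Xfrak_q^n)_{k i}(x) (X_p Xfrak_p^m)_{l j}(x) d mu_{ij}(x) *)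
Definition momM (q p : nat) (mu : 'I_q -> 'I_p -> rmeasure) (N n m : nat)
  : 'M[R]_N :=
  \matrix_(k < N, l < N)
    \sum_(i < q) \sum_(j < p)
      rmint (mu i j) (fun x =>
        (Xmono N q x *m mxpow (Xfrak q x) n) k i *
        (Xmono N p x *m mxpow (Xfrak p x) m) l j).

Definition Lam (n m r : nat) : 'M[R]_(n, m) :=
  \matrix_(i < n, j < m) ((j : nat) == (i + r)%N)%:R.

(* entry access by natural-number indices (0 outside the range) *)
Definition mxe (m n : nat) (A : 'M[R]_(m, n)) (i j : nat) : R :=
  match @insub _ (fun k => (k < m)%N) 'I_m i, @insub _ (fun k => (k < n)%N) 'I_n j with
  | Some i', Some j' => A i' j'
  | _, _ => 0
  end.

(* leading principal k x k submatrix (meaningful for k <= size) *)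
Definition lead (k N : nat) (A : 'M[R]_N) : 'M[R]_k :=
  \matrix_(i < k, j < k) mxe A i j.

Definition GaussBorel (N : nat) (M L U : 'M[R]_N) : Prop :=
  [/\ forall i j : 'I_N, (i < j)%N -> L i j = 0,
      forall i : 'I_N, L i i = 1,
      forall i j : 'I_N, (j < i)%N -> U i j = 0,
      U \in unitmx &
      M = invmx L *m invmx U].

Definition Tup (p N : nat) (UN : 'M[R]_N) : 'M[R]_(N, N - p) :=
  invmx UN *m (Lam (N - p) N p)^T *m lead (N - p) UN.

Definition Tlo (q N : nat) (LN : 'M[R]_N) : 'M[R]_(N - q, N) :=
  lead (N - q) LN *m Lam (N - q) N q *m invmx LN.

End Defs.

From HB Require Import structures.
From mathcomp Require Import all_boot all_order all_algebra.
From mathcomp Require Import all_classical all_reals all_analysis.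
Import Order.TTheory GRing.Theory Num.Theory.
Local Open Scope ring_scope.

(* Only the triangular shape of the Gauss--Borel factors matters, not the
   moments.  Taking leading principal k x k blocks is multiplicative on
   products A B with A lower or B upper triangular, since every term through
   an index >= k vanishes.  So for upper triangular U, V the leading block of
   U^-1 V is (U^[k])^-1 V^[k], and the conjugation telescopes to T for U;
   dually for the lower factors L. *)

Section InverseMatrix.
Context {R : comUnitRingType}.

Lemma mulmx1_invmx {n} {A B : 'M[R]_n} : A *m B = 1%:M -> invmx A = B.
Proof.
move=> AB1; have [uA _] := mulmx1_unit AB1.
by rewrite -[invmx A]mulmx1 -AB1 mulKmx.
Qed.

Lemma unitmx_unitriangular {n} (A : 'M[R]_n) :
  is_trig_mx A -> (forall i, A i i = 1) -> A \in unitmx.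
Proof. by move=> trigA diagA; rewrite unitmxE det_trig // big1 ?unitr1. Qed.

End InverseMatrix.

Section LeadingSubmatrix.
Context {R : realType}.

Lemma mxeE {m n} (A : 'M[R]_(m, n)) (i : 'I_m) (j : 'I_n) : mxe A i j = A i j.
Proof. by rewrite /mxe !valK. Qed.

Context {k N : nat}.
Hypothesis leq_kN : (k <= N)%N.

Lemma leadE (A : 'M[R]_N) (i j : 'I_k) :
  lead k A i j = A (widen_ord leq_kN i) (widen_ord leq_kN j).
Proof. by rewrite mxE -mxeE. Qed.

Lemma lead1 : lead k (1%:M : 'M[R]_N) = 1%:M.
Proof.
apply/matrixP => i j; rewrite leadE !mxE.
by congr ((_ : bool)%:R); apply/eqP/eqP => [/(congr1 val)/val_inj | ->].
Qed.

Lemma lead_mulmx (A B : 'M[R]_N) :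
  (forall i j l : 'I_N, (i < k)%N -> (j < k)%N -> (k <= l)%N -> A i l * B l j = 0) ->
  lead k (A *m B) = lead k A *m lead k B.
Proof.
move=> AB0; apply/matrixP => i j; rewrite leadE !mxE.
pose F l := mxe A i l * mxe B l j.
rewrite (eq_bigr (fun l : 'I_k => F l)) => [|l _]; last by rewrite !mxE.
rewrite (big_ord_widen N F leq_kN) (bigID (fun l : 'I_N => (l < k)%N)) /=.
rewrite [X in _ + X]big1 ?addr0 => [|l]; last first.
  rewrite -leqNgt => le_kl.
  exact: AB0 (widen_ord leq_kN i) (widen_ord leq_kN j) l (ltn_ord i) (ltn_ord j) le_kl.
by apply: eq_bigr => l _; rewrite /F -!mxeE.
Qed.

Lemma lead_mulmx_upper (A B : 'M[R]_N) :
  is_trig_mx B^T -> lead k (A *m B) = lead k A *m lead k B.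
Proof.
move=> /is_trig_mxP trigB; apply: lead_mulmx => i j l _ lt_jk le_kl.
have lt_jl : (j < l)%N := leq_trans lt_jk le_kl.
by move: (trigB j l lt_jl); rewrite mxE => ->; rewrite mulr0.
Qed.

Lemma lead_mulmx_lower (A B : 'M[R]_N) :
  is_trig_mx A -> lead k (A *m B) = lead k A *m lead k B.
Proof.
move=> /is_trig_mxP trigA; apply: lead_mulmx => i j l lt_ik _ le_kl.
by rewrite trigA ?mul0r //; exact: leq_trans lt_ik le_kl.
Qed.

Lemma lead_mulVmx_upper (U : 'M[R]_N) :
  is_trig_mx U^T -> U \in unitmx -> lead k (invmx U) *m lead k U = 1%:M.
Proof. by move=> trigU uU; rewrite -lead_mulmx_upper // mulVmx // lead1. Qed.

Lemma lead_mulmxV_lower (L : 'M[R]_N) :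
  is_trig_mx L -> L \in unitmx -> lead k L *m lead k (invmx L) = 1%:M.
Proof. by move=> trigL uL; rewrite -lead_mulmx_lower // mulmxV // lead1. Qed.

End LeadingSubmatrix.

Section ChristoffelConnection.
Context {R : realType} {N : nat}.

Lemma GaussBorelP {M L U : 'M[R]_N} : GaussBorel M L U ->
  [/\ is_trig_mx L, L \in unitmx, is_trig_mx U^T & U \in unitmx].
Proof.
case=> /is_trig_mxP-trigL diagL trigU uU _.
split=> //; first exact: unitmx_unitriangular.
by apply/is_trig_mxP => i j lt_ij; rewrite mxE trigU.
Qed.

Lemma Tup_conjugate p {U V : 'M[R]_N} :
  is_trig_mx U^T -> U \in unitmx -> is_trig_mx V^T -> V \in unitmx ->
  (invmx U *m V) *m Tup p V *m invmx (lead (N - p) (invmx U *m V)) = Tup p U.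
Proof.
move=> trigU uU trigV uV; have le_kN := leq_subr p N.
have UU1 := lead_mulVmx_upper le_kN U trigU uU.
have VV1 := lead_mulVmx_upper le_kN V trigV uV.
have [_ uUk] := mulmx1_unit UU1; have [_ uVk] := mulmx1_unit VV1.
have -> : invmx (lead (N - p) (invmx U *m V))
        = invmx (lead (N - p) V) *m lead (N - p) U.
  apply: mulmx1_invmx; rewrite lead_mulmx_upper // -(mulmx1_invmx (mulmx1C UU1)).
  by rewrite !mulmxA mulmxK // mulVmx.
by rewrite /Tup !mulmxA mulmxK // mulmxK.
Qed.

Lemma Tlo_conjugate q {L K : 'M[R]_N} :
  is_trig_mx L -> L \in unitmx -> is_trig_mx K -> K \in unitmx ->
  invmx (lead (N - q) (K *m invmx L)) *m Tlo q K *m (K *m invmx L) = Tlo q L.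
Proof.
move=> trigL uL trigK uK; have le_kN := leq_subr q N.
have LL1 := lead_mulmxV_lower le_kN L trigL uL.
have KK1 := lead_mulmxV_lower le_kN K trigK uK.
have [uLk _] := mulmx1_unit LL1; have [uKk _] := mulmx1_unit KK1.
have -> : invmx (lead (N - q) (K *m invmx L))
        = lead (N - q) L *m invmx (lead (N - q) K).
  apply: mulmx1_invmx; rewrite lead_mulmx_lower // -(mulmx1_invmx LL1).
  by rewrite !mulmxA mulmxKV // mulmxV.
by rewrite /Tlo !mulmxA mulmxKV // mulmxKV.
Qed.

End ChristoffelConnection.

Theorem mainTheorem8 (R : realType) (p q N : nat)
  (mu : 'I_q -> 'I_p -> rmeasure R)
  (hp : (1 <= p)%N) (hq : (1 <= q)%N) (hN : (maxn p q < N)%N)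
  (hmu : forall i j, finite_moments (mu i j))
  (b a : nat) (hb : (1 <= b <= q)%N) (ha : (1 <= a <= p)%N)
  (L U : nat -> nat -> 'M[R]_N)
  (hb1 : GaussBorel (momM mu N (b - 1) 0) (L (b - 1)%N 0%N) (U (b - 1)%N 0%N))
  (hb2 : GaussBorel (momM mu N b 0) (L b 0%N) (U b 0%N))
  (ha1 : GaussBorel (momM mu N 0 (a - 1)) (L 0%N (a - 1)%N) (U 0%N (a - 1)%N))
  (ha2 : GaussBorel (momM mu N 0 a) (L 0%N a) (U 0%N a)) :
  let Ub := invmx (U b 0%N) *m U (b - 1)%N 0%N in
  let La := L 0%N (a - 1)%N *m invmx (L 0%N a) in
  Ub *m Tup p (U (b - 1)%N 0%N) *m invmx (lead (N - p) Ub) = Tup p (U b 0%N)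
  /\ invmx (lead (N - q) La) *m Tlo q (L 0%N (a - 1)%N) *m La = Tlo q (L 0%N a).
Proof.
move=> Ub La.
have [_ _ trigUb uUb] := GaussBorelP hb2; have [_ _ trigUb1 uUb1] := GaussBorelP hb1.
have [trigLa uLa _ _] := GaussBorelP ha2; have [trigLa1 uLa1 _ _] := GaussBorelP ha1.
split; [exact: (Tup_conjugate p trigUb uUb trigUb1 uUb1) | exact: (Tlo_conjugate q trigLa uLa trigLa1 uLa1)].
Qed.
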